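(* Let $G$ be an infinite, connected, locally finite graph, let $P$ be a metric ray of $G$ with ordered vertex set $\{u_0,u_1,u_2,\dots\}$, and let $S=\{x_1,\dots,x_n\}$ be a finite set of vertices of $G$. Then there exists an integer $i_0\ge 0$ such that for every $k\ge 0$, $$r(u_{i_0+k}\mid S)=r(u_{i_0}\mid S)+(k,k,\dots,k),$$ where $(k,\dots,k)$ has $n=|S|$ entries.
   Context: $d$ denotes shortest-path distance in $G$. For a finite ordered set $S=\{x_1,\dots,x_n\}$ of vertices, $r(u\mid S)=(d(u,x_1),\dots,d(u,x_n))$. A metric ray of $G$ with endpoint $u_0$ is an infinite subgraph $P$ whose vertices admit an ordering $u_0,u_1,u_2,\dots$ (all distinct) with $u_k$ adjacent to $u_{k+1}$ in $P$ for all $k\ge 0$ and $d_G(u_0,u_k)=k$ for all $k\ge0$. *)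

From Stdlib Require Import List Arith ClassicalEpsilon.
Import ListNotations.

Section Graph.
Context {V : Type} (adj : V -> V -> Prop).

Inductive walk : V -> V -> nat -> Prop :=
| walk0 : forall v, walk v v 0
| walkS : forall u w v n, adj u w -> walk w v n -> walk u v (S n).

Definition simple_graph : Prop :=
  (forall u v, adj u v -> adj v u) /\ (forall u, ~ adj u u).

Definition connected : Prop := forall u v, exists n, walk u v n.

Definition locally_finite : Prop :=
  forall v, exists l : list V, forall w, adj v w -> In w l.

Definition infinite_graph : Prop := ~ exists l : list V, forall v, In v l.

Definition is_dist (u v : V) (m : nat) : Prop :=
  walk u v m /\ forall k, walk u v k -> m <= k.

(* shortest-path distance d_G(u,v) (well defined when G is connected) *)
Definition dist (u v : V) : nat := epsilon (inhabits 0) (fun m => is_dist u v m).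

(* metric representation r(u | S) for an ordered set S = [x_1; ...; x_n] *)
Definition rep (u : V) (S : list V) : list nat := map (fun x => dist u x) S.

Definition metric_ray (u : nat -> V) : Prop :=
  (forall i j, u i = u j -> i = j) /\
  (forall k, adj (u k) (u (S k))) /\
  (forall k, dist (u 0) (u k) = k).

End Graph.

From Stdlib Require Import List Arith Lia Classical ClassicalEpsilon.

(* Fix a vertex x and put h(j) = d(u_j,x) + d(u_0,x) - j.
   Since u_j and u_{j+1} are adjacent, d(u_{j+1},x) <= d(u_j,x) + 1, so h is
   a nonincreasing sequence of naturals; the triangle inequality through x
   and d(u_0,u_j) = j give j <= d(u_j,x) + d(u_0,x), so no truncation occurs.
   A nonincreasing sequence of naturals is eventually constant, and once h
   is constant the distance to x grows by exactly one along the ray.  Taking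
   the largest of the thresholds for the finitely many x in S gives i_0. *)

Lemma least_witness (P : nat -> Prop) (n : nat) :
  P n -> exists m, P m /\ forall k, P k -> m <= k.
Proof.
  induction n as [n IH] using (well_founded_induction lt_wf). intro Hn.
  destruct (classic (exists k, k < n /\ P k)) as [[k [Hk Pk]] | Hsmaller].
  - exact (IH k Hk Pk).
  - exists n. split; [exact Hn |].
    intros k Pk. apply Nat.nlt_ge. intro Hk. apply Hsmaller. eauto.
Qed.

Section Distance.
Context {V : Type} (adj : V -> V -> Prop).
Hypothesis adj_sym : forall x y, adj x y -> adj y x.
Hypothesis conn : connected adj.

Lemma walk_app a b n : walk adj a b n ->
  forall c m, walk adj b c m -> walk adj a c (n + m).
Proof. induction 1; intros; simpl; [assumption | econstructor; eauto]. Qed.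

Lemma walk_snoc a b c n : walk adj a b n -> adj b c -> walk adj a c (S n).
Proof.
  intros Hw Hbc. rewrite <- Nat.add_1_r. apply (walk_app _ _ _ Hw).
  econstructor; [exact Hbc | constructor].
Qed.

Lemma walk_rev a b n : walk adj a b n -> walk adj b a n.
Proof. induction 1; [constructor | eapply walk_snoc; eauto]. Qed.

Lemma dist_spec a b : is_dist adj a b (dist adj a b).
Proof.
  unfold dist. apply epsilon_spec. destruct (conn a b) as [n Hn].
  exact (least_witness _ n Hn).
Qed.

Lemma dist_le a b n : walk adj a b n -> dist adj a b <= n.
Proof. apply (proj2 (dist_spec a b)). Qed.

Lemma dist_sym a b : dist adj a b = dist adj b a.
Proof.
  apply Nat.le_antisymm; apply dist_le, walk_rev, dist_spec.
Qed.

Lemma dist_triangle a b c : dist adj a c <= dist adj a b + dist adj b c.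
Proof. apply dist_le, (walk_app _ _ _ (proj1 (dist_spec a b))), dist_spec. Qed.

Lemma dist_adj_step a b c : adj a b -> dist adj b c <= S (dist adj a c).
Proof. intro Hab. apply dist_le. econstructor; [apply adj_sym, Hab | apply dist_spec]. Qed.

End Distance.

Definition nonincreasing (h : nat -> nat) : Prop := forall k, h (S k) <= h k.

Lemma nonincreasing_le (h : nat -> nat) :
  nonincreasing h -> forall i j, i <= j -> h j <= h i.
Proof.
  intros Hmono i j Hij. induction Hij; [reflexivity |].
  specialize (Hmono m). lia.
Qed.

(* A nonincreasing sequence of naturals is eventually constant:
   by strong induction on h(0), either h is constant or some h(k) < h(0). *)
Lemma nonincreasing_stabilizes (h : nat -> nat) :
  nonincreasing h -> exists N, forall M, N <= M -> h M = h N.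
Proof.
  remember (h 0) as n eqn:Hn. revert h Hn.
  induction n as [n IH] using (well_founded_induction lt_wf). intros h Hn Hmono.
  destruct (classic (exists k, h k < h 0)) as [[k Hk] | Hconst].
  - destruct (IH (h k) ltac:(lia) (fun j => h (k + j))) as [N HN].
    + now rewrite Nat.add_0_r.
    + intro j. rewrite Nat.add_succ_r. apply Hmono.
    + exists (k + N). intros M HM.
      replace M with (k + (M - k)) by lia. apply HN. lia.
  - exists 0. intros M _. apply Nat.le_antisymm.
    + apply (nonincreasing_le h Hmono); lia.
    + apply Nat.nlt_ge. intro HM. apply Hconst. eauto.
Qed.

Section MetricRay.
Context {V : Type} (adj : V -> V -> Prop).
Hypothesis adj_sym : forall x y, adj x y -> adj y x.
Hypothesis conn : connected adj.
Variable u : nat -> V.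
Hypothesis ray_adj : forall k, adj (u k) (u (S k)).
Hypothesis ray_geodesic : forall k, dist adj (u 0) (u k) = k.

(* Triangle inequality through x: j = d(u_0,u_j) <= d(u_0,x) + d(x,u_j). *)
Lemma ray_index_bound x j : j <= dist adj (u j) x + dist adj (u 0) x.
Proof.
  rewrite <- (ray_geodesic j) at 1.
  pose proof (dist_triangle adj conn (u 0) x (u j)).
  rewrite (dist_sym adj adj_sym conn x (u j)) in H. lia.
Qed.

(* Far enough along the ray, the distance to any fixed vertex increases by
   exactly one per step, since the defect d(u_j,x) + d(u_0,x) - j stabilizes. *)
Lemma ray_eventually_receding x : exists N, forall M k, N <= M ->
  dist adj (u (M + k)) x = dist adj (u M) x + k.
Proof.
  destruct (nonincreasing_stabilizes
              (fun j => dist adj (u j) x + dist adj (u 0) x - j)) as [N HN].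
  - intro k.
    pose proof (dist_adj_step adj adj_sym conn _ _ x (ray_adj k)).
    pose proof (ray_index_bound x k). pose proof (ray_index_bound x (S k)). lia.
  - exists N. intros M k HM.
    pose proof (HN M HM) as HM'. pose proof (HN (M + k) ltac:(lia)) as HMk.
    pose proof (ray_index_bound x M). pose proof (ray_index_bound x (M + k)).
    cbv beta in HM', HMk. lia.
Qed.

Lemma ray_eventually_receding_list (S : list V) : exists N, forall x, In x S ->
  forall M k, N <= M -> dist adj (u (M + k)) x = dist adj (u M) x + k.
Proof.
  induction S as [| y S [N1 H1]].
  - exists 0. intros x [].
  - destruct (ray_eventually_receding y) as [N2 H2].
    exists (N1 + N2). intros x [<- | Hin] M k HM.
    + apply H2. lia.
    + apply H1; [exact Hin | lia].
Qed.

End MetricRay.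

Theorem lemma4 (V : Type) (adj : V -> V -> Prop)
  (Hsimple : simple_graph adj) (Hinf : infinite_graph (V:=V))
  (Hconn : connected adj) (Hlf : locally_finite adj)
  (u : nat -> V) (Hray : metric_ray adj u)
  (S : list V) (HS : NoDup S) :
  exists i0 : nat, forall k : nat,
    rep adj (u (i0 + k)) S = map (fun m => m + k) (rep adj (u i0) S).
Proof.
  destruct Hsimple as [adj_sym _]. destruct Hray as [_ [ray_adj ray_geodesic]].
  destruct (ray_eventually_receding_list adj adj_sym Hconn u ray_adj ray_geodesic S)
    as [N HN].
  exists N. intro k. unfold rep. rewrite map_map.
  apply map_ext_in. intros x Hx. apply HN; [exact Hx | reflexivity].
Qed.
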